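(* For all words $z\in\{0,1\}^*$ and all integers $k\geq 1$, \[V([z10^{2k}]_F)=V([z10^{2k-2}]_F)+V([z(01)^k]_F).\]
   Context: Fibonacci numbers: $F_0=0$, $F_1=1$, $F_{m+2}=F_{m+1}+F_m$. For a word $k_m\cdots k_0$ of nonnegative integer digits, $[k_m\cdots k_0]_F=\sum_{i=0}^m k_iF_{i+2}$; $u^j$ denotes $j$ concatenated copies of $u$. Standard Fibonacci words: $f_{-1}=b$, $f_0=a$, $f_{m+1}=f_mf_{m-1}$. The Fibonacci word ${\bf f}=\lim f_m$, with prefix of length $j$ denoted ${\bf f}(0..j]$. $V(N)$ is the number of factorizations of ${\bf f}(0..N]$ as $f_m^{k_m}\cdots f_0^{k_0}$ with all $k_i\geq 0$ (into standard words $f_i$, $i\geq0$, in non-strictly decreasing order of index), counted up to leading zero exponents; $V(0)=1$. *)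

From mathcomp Require Import all_boot.
Set Implicit Arguments. Unset Strict Implicit. Unset Printing Implicit Defensive.

Fixpoint fib (n : nat) : nat :=
  match n with
  | 0 => 0
  | 1 => 1
  | (m.+1 as p).+1 => fib p + fib m
  end.

(* [k_m ... k_0]_F = sum_i k_i F_{i+2}; the word is written most significant
   digit first, so k_i is the i-th letter of the reversed word. *)
Definition fibval (w : seq nat) : nat :=
  \sum_(i < size w) nth 0 (rev w) i * fib i.+2.

Definition bits (z : seq bool) : seq nat := map nat_of_bool z.

Definition letter_a : bool := false.
Definition letter_b : bool := true.

(* Standard Fibonacci words f_m for m >= 0 (f_{-1} = b):
   f_0 = a, f_1 = f_0 f_{-1} = ab, f_{m+2} = f_{m+1} f_m. *)
Fixpoint stdword (m : nat) : seq bool :=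
  match m with
  | 0 => [:: letter_a]
  | 1 => [:: letter_a; letter_b]
  | (p.+1 as q).+1 => stdword q ++ stdword p
  end.

(* Prefix of length N of the infinite Fibonacci word f = lim f_m.
   Since |f_N| = F_{N+2} >= N and each f_m is a prefix of f_{m+1},
   the length-N prefix of f is the length-N prefix of f_N. *)
Definition fibprefix (N : nat) : seq bool := take N (stdword N).

(* The word f_m^{k_m} ... f_0^{k_0} for the exponent list ks = [k_0; ...; k_m]. *)
Definition factor_word (ks : seq nat) : seq bool :=
  flatten [seq flatten (nseq (nth 0 ks i) (stdword i)) | i <- rev (iota 0 (size ks))].

(* ks is a factorization of the length-N prefix, normalized so that the
   leading exponent k_m is nonzero (counting up to leading zero exponents). *)
Definition is_factorization (N : nat) (ks : seq nat) : bool :=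
  (last 1 ks != 0) && (factor_word ks == fibprefix N).

Fixpoint allseqs (L b : nat) : seq (seq nat) :=
  match L with
  | 0 => [:: [::]]
  | L'.+1 => [seq x :: s | x <- iota 0 b.+1, s <- allseqs L' b]
  end.

(* This is no
   restriction: every |f_i| >= 1 and |f_i| >= i+1, so a normalized
   factorization of a word of length N has m+1 <= N (or is empty) and all
   k_i <= N. *)
Definition candidates (N : nat) : seq (seq nat) :=
  flatten [seq allseqs L N | L <- iota 0 N.+1].

(* V(N): number of factorizations of f(0..N]; V(0) = 1 (empty factorization). *)
Definition V (N : nat) : nat := count (is_factorization N) (candidates N).

From mathcomp Require Import all_boot zify.
Set Implicit Arguments. Unset Strict Implicit. Unset Printing Implicit Defensive.

(* For a binary word w let P_w ([wprefix w]) be the prefix of length [w]_F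
   ([wval w]) of the Fibonacci word.  The morphism phi : a -> ab, b -> a maps
   f_m to f_(m+1), hence P_(w0) = phi(P_w) and P_(w1) = phi(P_w b).  Splitting
   off the exponent of f_0 shows that the factorizations of phi(u a b^m)
   correspond to those of the words u a b^i, i <= m, and no factorization ends
   in bb.  An induction on [w]_F then yields closed forms for the numbers of
   factorizations of P_w, P_w a and P_w b in terms of [w]_F and
   w' := sum_i w_i F_(i+1) ([wval1 w]), depending on the parity of the number
   of trailing zeros of w; e.g. V([w]_F) = 1 + [w]_F - w' when it is even.
   When it is odd, P_w ends in b and P_w without this letter is P_u for a
   representation u of [w]_F - 1.  The proposition then reduces to an identity
   between these values, as z 1 0^(2k-2) and z (01)^(k-1) 1 have the same ones. *)

(** * The Fibonacci morphism *)

Lemma last_nseq (T : Type) (x y : T) n : 0 < n -> last x (nseq n y) = y.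
Proof. by case: n => // n _; elim: n. Qed.

Definition phi_letter (c : bool) : seq bool := if c then [:: false] else [:: false; true].

Definition phi (w : seq bool) : seq bool := flatten (map phi_letter w).

Lemma phi_cons c w : phi (c :: w) = phi_letter c ++ phi w.
Proof. by []. Qed.

Lemma phi_cat u w : phi (u ++ w) = phi u ++ phi w.
Proof. by rewrite /phi map_cat flatten_cat. Qed.

Lemma phi_rcons w c : phi (rcons w c) = phi w ++ phi_letter c.
Proof. by rewrite -cats1 phi_cat /phi /= cats0. Qed.

Lemma phi_rcons_true w : phi (rcons w true) = rcons (phi w) false.
Proof. by rewrite phi_rcons cats1. Qed.

Lemma phi_rcons_false w : phi (rcons w false) = rcons (rcons (phi w) false) true.
Proof. by rewrite phi_rcons -!cats1 -catA. Qed.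

Lemma phi_flatten ws : phi (flatten ws) = flatten (map phi ws).
Proof. by elim: ws => //= w ws IH; rewrite phi_cat IH. Qed.

Lemma phi_nseq_true n : phi (nseq n true) = nseq n false.
Proof. by elim: n => // n IH; rewrite [nseq _ _]/= phi_cons IH. Qed.

Lemma size_phi w : size (phi w) = size w + count negb w.
Proof. by elim: w => // c w IH; rewrite phi_cons size_cat IH; case: c => /=; lia. Qed.

Lemma count_negb_phi w : count negb (phi w) = size w.
Proof. by elim: w => // c w IH; rewrite phi_cons count_cat IH; case: c. Qed.

Lemma phi_inj : injective phi.
Proof.
have head_phi w : head false (phi w) = false by case: w => [|[] w].
elim=> [|c u IH] [|d w] //; rewrite ?phi_cons; [by case: d | by case: c |].
case: c; case: d => -[]; try by move/IH->.
- by move=> eq_phi; have := head_phi u; rewrite eq_phi.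
- by move=> eq_phi; have := head_phi w; rewrite -eq_phi.
Qed.

Lemma phi_not_bb w x : phi w != x ++ [:: true; true].
Proof.
case/lastP: w => [|w c]; first by case: x.
rewrite phi_rcons; apply/eqP => /(congr1 (fun s => take 2 (rev s))).
by rewrite !rev_cat; case: c.
Qed.

Lemma stdwordSS m : stdword m.+2 = stdword m.+1 ++ stdword m.
Proof. by []. Qed.

Lemma phi_stdword m : phi (stdword m) = stdword m.+1.
Proof. by elim/ltn_ind: m => -[|[|m]] IH //; rewrite stdwordSS phi_cat !IH. Qed.

(** * Prefixes of the Fibonacci word *)

Lemma fibSS n : fib n.+2 = fib n.+1 + fib n.
Proof. by []. Qed.

Lemma size_stdword m : size (stdword m) = fib m.+2.
Proof. by elim/ltn_ind: m => -[|[|m]] IH //; rewrite stdwordSS size_cat !IH. Qed.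

Lemma ltn_fibSS n : n < fib n.+2.
Proof.
elim/ltn_ind: n => -[|[|n]] IH //; rewrite fibSS.
by have := IH n.+1 (ltnSn _); have := IH n (ltnW (ltnSn _)); lia.
Qed.

Lemma prefix_stdword m n : m <= n -> prefix (stdword m) (stdword n).
Proof.
elim: n => [|n IH]; first by rewrite leqn0 => /eqP->; exact: prefix_refl.
rewrite leq_eqVlt => /orP[/eqP->|/IH le_mn]; first exact: prefix_refl.
apply: (prefix_trans le_mn); case: n {IH le_mn} => [|n] //.
by rewrite stdwordSS prefix_prefix.
Qed.

Lemma size_fibprefix N : size (fibprefix N) = N.
Proof. by rewrite size_takel // size_stdword ltnW // ltn_fibSS. Qed.

Lemma fibprefixP p m : prefix p (stdword m) -> p = fibprefix (size p).
Proof.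
move=> pm; set n := size p; set M := maxn m n.
have pM := prefix_trans pm (prefix_stdword (leq_maxl m n)).
have fM : prefix (fibprefix n) (stdword M).
  exact: prefix_trans (prefix_take (stdword n) n) (prefix_stdword (leq_maxr m n)).
move: pM fM; rewrite !prefixE size_fibprefix => /eqP pE /eqP fE.
by rewrite -fE pE.
Qed.

Lemma take_fibprefix n N : n <= N -> take n (fibprefix N) = fibprefix n.
Proof.
move=> le_nN.
have := fibprefixP (prefix_trans (prefix_take _ n) (prefix_take (stdword N) N)).
by rewrite size_takel ?size_fibprefix.
Qed.

Lemma fibprefixS N : exists c, fibprefix N.+1 = rcons (fibprefix N) c.
Proof.
case/lastP E: (fibprefix N.+1) => [|p c]; first by have := size_fibprefix N.+1; rewrite E.
exists c; congr rcons.
have /eqP := size_fibprefix N.+1; rewrite E size_rcons eqSS => /eqP size_p.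
by rewrite -(take_fibprefix (leqnSn N)) E -cats1 take_size_cat.
Qed.

Lemma prefix_phi_fibprefix N :
  prefix (rcons (phi (fibprefix N)) false) (stdword N.+1).
Proof.
rewrite -phi_stdword /fibprefix -{2}(cat_take_drop N (stdword N)) phi_cat.
case E: (drop N (stdword N)) => [|c s].
  have := size_drop N (stdword N); rewrite E size_stdword => /eqP.
  by rewrite eq_sym subn_eq0 leqNgt ltn_fibSS.
by rewrite phi_cons -cats1 prefix_catr // eqxx; case: (c) => //=; apply: prefix0s.
Qed.

(** * Counting factorizations *)

Lemma factor_word_cons k ks :
  factor_word (k :: ks) = phi (factor_word ks) ++ nseq k false.
Proof.
rewrite /factor_word.
have -> : rev (iota 0 (size (k :: ks))) = map succn (rev (iota 0 (size ks))) ++ [:: 0].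
  by rewrite /= rev_cons -cats1 map_rev (iotaDl 1 0).
rewrite map_cat flatten_cat /= cats0; congr (_ ++ _); last by elim: k => //= k ->.
rewrite phi_flatten -!map_comp; congr flatten; apply: eq_map => i /=.
by rewrite phi_flatten map_nseq phi_stdword.
Qed.

Lemma factor_word_rcons ks k :
  factor_word (rcons ks k) = flatten (nseq k (stdword (size ks))) ++ factor_word ks.
Proof.
rewrite /factor_word size_rcons -addn1 iotaD add0n /= cats1 rev_rcons /= nth_rcons ltnn eqxx.
congr (_ ++ _); congr flatten; apply/eq_in_map => i; rewrite mem_rev mem_iota /= => lt_i.
by rewrite nth_rcons lt_i.
Qed.

Lemma factor_word_not_bb ks x : factor_word ks != x ++ [:: true; true].
Proof.
case: ks => [|[|k] ks]; first by case: x.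
  by rewrite factor_word_cons cats0 phi_not_bb.
rewrite factor_word_cons; apply/eqP => /(congr1 (last true)).
by rewrite !last_cat last_nseq.
Qed.

Lemma exponents_le_size ks : all (leq^~ (size (factor_word ks))) ks.
Proof.
elim: ks => //= k ks IH; rewrite factor_word_cons size_cat size_nseq leq_addl /=.
by apply: sub_all IH => j /=; rewrite size_phi; lia.
Qed.

Lemma allseqsS L B : allseqs L.+1 B = [seq k :: s | k <- iota 0 B.+1, s <- allseqs L B].
Proof. by []. Qed.

Lemma size_allseqs L B s : s \in allseqs L B -> size s = L.
Proof.
elim: L s => [|L IH] s; first by rewrite inE => /eqP->.
by rewrite allseqsS => /allpairsPdep[k [t [_ /IH <- ->]]].
Qed.

Lemma count_allseqsS P L B :
  count P (allseqs L.+1 B) = \sum_(0 <= k < B.+1) count (fun s => P (k :: s)) (allseqs L B).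
Proof.
rewrite allseqsS count_flatten sumnE !big_map /index_iota subn0.
by apply: eq_bigr => k _; rewrite count_map.
Qed.

Lemma count_allseqsS_rcons P L B :
  count P (allseqs L.+1 B) = \sum_(0 <= k < B.+1) count (fun s => P (rcons s k)) (allseqs L B).
Proof.
elim: L P => [|L IH] P; rewrite count_allseqsS //.
under eq_bigr do rewrite IH.
by rewrite exchange_big; apply: eq_bigr => j _; rewrite count_allseqsS.
Qed.

Lemma count_allseqs_widen (P : pred (seq nat)) L B :
  (forall s, P s -> all (leq^~ B) s) -> count P (allseqs L B.+1) = count P (allseqs L B).
Proof.
elim: L P => [|L IH] P PB //.
rewrite !count_allseqsS big_nat_recr //=.
rewrite (eq_count (a2 := pred0)) ?count_pred0 ?addn0; last first.
  by move=> s; apply/negbTE/negP => /PB /andP[]; rewrite ltnn.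
by apply: eq_bigr => k _; apply: IH => s /PB /andP[].
Qed.

Lemma constant_after (f : nat -> nat) n0 :
  (forall n, n0 <= n -> f n.+1 = f n) -> forall n, n0 <= n -> f n = f n0.
Proof.
move=> fS n /subnKC <-; elim: (n - n0) => [|d IH]; first by rewrite addn0.
by rewrite addnS fS ?IH // leq_addr.
Qed.

Definition nfact_in L B x := count (fun ks => factor_word ks == x) (allseqs L B).

Definition nfact x := nfact_in (size x) (size x) x.

Lemma nfact_inSB L B x : size x <= B -> nfact_in L B.+1 x = nfact_in L B x.
Proof.
move=> le_xB; apply: count_allseqs_widen => s /eqP fw_s.
by apply: sub_all (exponents_le_size s) => k /=; rewrite fw_s => /leq_trans; apply.
Qed.

Lemma nfact_inSL L B x : size x <= L -> nfact_in L.+1 B x = nfact_in L B x.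
Proof.
move=> le_xL; rewrite /nfact_in count_allseqsS_rcons big_nat_recl //=.
rewrite big1 ?addn0 => [|k _]; first by apply: eq_count => s; rewrite factor_word_rcons.
rewrite (eq_in_count (a2 := pred0)) ?count_pred0 // => s /size_allseqs size_s.
apply/negbTE/eqP => /(congr1 size).
rewrite factor_word_rcons size_cat size_flatten /shape map_nseq sumn_nseq size_stdword size_s.
by have := ltn_fibSS L; nia.
Qed.

Lemma nfact_inE L B x : size x <= L -> size x <= B -> nfact_in L B x = nfact x.
Proof.
move=> le_xL le_xB; rewrite /nfact.
rewrite (constant_after (f := fun B => nfact_in L B x) _ le_xB); last by move=> n /nfact_inSB.
by rewrite (constant_after (f := fun L => nfact_in L (size x) x) _ le_xL) // => n /nfact_inSL.
Qed.

(* A list of exponents is a normalized one padded with trailing zeros. *)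
Lemma sum_nfact_in_normal M B x :
  \sum_(0 <= L < M.+1)
     count (fun ks => (last 1 ks != 0) && (factor_word ks == x)) (allseqs L B)
  = nfact_in M B x.
Proof.
elim: M => [|M IH]; first by rewrite big_nat1.
rewrite big_nat_recr //= IH /nfact_in !count_allseqsS_rcons !big_nat_recl //=.
rewrite [X in _ + (X + _)](eq_count (a2 := pred0)) => [|s]; last by rewrite last_rcons.
rewrite count_pred0 add0n.
congr (_ + _); last by apply: eq_bigr => k _; apply: eq_count => s; rewrite last_rcons.
by apply: eq_count => s; rewrite factor_word_rcons.
Qed.

Lemma V_nfact N : V N = nfact (fibprefix N).
Proof.
rewrite /V /candidates count_flatten sumnE !big_map.
have -> : iota 0 N.+1 = index_iota 0 N.+1 by rewrite /index_iota subn0.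
by rewrite sum_nfact_in_normal /nfact size_fibprefix.
Qed.

Lemma nfact_bb x : nfact (x ++ [:: true; true]) = 0.
Proof.
rewrite /nfact /nfact_in (eq_count (a2 := pred0)) ?count_pred0 // => ks.
exact/negbTE/factor_word_not_bb.
Qed.

(* [phi (rcons y false)] ends in [b], so the final run of [a]s on the right has length [m]. *)
Lemma eq_phi_cat_nseq z y m k :
  (phi z ++ nseq k false == phi (rcons y false) ++ nseq m false)
  = (k <= m) && (z == rcons y false ++ nseq (m - k) true).
Proof.
have catIs (s1 s2 t : seq bool) : (s1 ++ t == s2 ++ t) = (s1 == s2).
  by rewrite -(can_eq revK) !rev_cat eqseq_cat // eqxx (can_eq revK).
case: leqP => [le_km|lt_mk] /=.
  rewrite -{1}(subnK le_km) nseqD catA catIs -phi_nseq_true -phi_cat.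
  exact: (inj_eq phi_inj).
rewrite -(subnK (ltnW lt_mk)) nseqD catA catIs; apply/negbTE/eqP => /(congr1 (last true)).
by rewrite phi_rcons !last_cat last_nseq ?subn_gt0.
Qed.

Lemma nfact_phi u m :
  nfact (phi (rcons u false ++ nseq m true))
  = \sum_(0 <= i < m.+1) nfact (rcons u false ++ nseq i true).
Proof.
set y := rcons u false.
have lt_y : size y < size (phi y) by rewrite size_phi /y -cats1 count_cat /=; lia.
rewrite phi_cat phi_nseq_true.
set L := (size (phi y) + m).-1.
have size_L : size (phi y ++ nseq m false) = L.+1.
  by rewrite size_cat size_nseq /L -subn1; lia.
have size_le i : i <= m -> size (y ++ nseq i true) <= L.
  by rewrite size_cat size_nseq /L -subn1; lia.
rewrite /nfact size_L /nfact_in count_allseqsS.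
under eq_bigr => k _ do under eq_count => s do rewrite factor_word_cons eq_phi_cat_nseq.
rewrite (big_cat_nat (n := m.+1)) //=; last by rewrite /L -subn1; lia.
rewrite [X in _ + X]big1_seq ?addn0 => [|k]; last first.
  rewrite mem_index_iota => /andP[_ /andP[lt_mk _]].
  by rewrite (eq_count (a2 := pred0)) ?count_pred0 // => s; rewrite leqNgt lt_mk.
rewrite big_nat_rev /=; apply: eq_big_nat => i /andP[_ lt_im].
rewrite add0n subSS leq_subr subKn //; under eq_count do rewrite andTb.
have le_im : i <= m by [].
by rewrite -/(nfact_in L L.+1 (y ++ nseq i true)) nfact_inE ?leqW ?size_le.
Qed.

Lemma nfact_phi_a u : nfact (phi (rcons u false)) = nfact (rcons u false).
Proof. by have := nfact_phi u 0; rewrite cats0 big_nat1 cats0. Qed.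

Lemma nfact_phi_ab u m : 0 < m ->
  nfact (phi (rcons u false ++ nseq m true))
  = nfact (rcons u false) + nfact (rcons (rcons u false) true).
Proof.
case: m => // m _; rewrite nfact_phi !big_nat_recl //= cats0 cats1 big1 ?addn0 // => i _.
by rewrite -[[:: true, true & _]]/(nseq i.+2 true) -addn2 nseqD catA nfact_bb.
Qed.

Lemma nfact_phi_end_a q (p := rcons q false) :
  [/\ nfact (phi p) = nfact p,
      nfact (rcons (phi p) true) = 0,
      nfact (rcons (phi p) false) = nfact p + nfact (rcons p true),
      nfact (rcons (rcons (phi p) false) false) = nfact p + nfact (rcons p true)
    & nfact (rcons (rcons (phi p) false) true) = nfact (rcons p false)].
Proof.
split; first exact: nfact_phi_a.
- by rewrite phi_rcons_false -!cats1 -catA nfact_bb.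
- have -> : rcons (phi p) false = phi (p ++ nseq 1 true).
    by rewrite /p -!cats1 !phi_cat phi_nseq_true -!catA.
  by rewrite nfact_phi_ab.
- have -> : rcons (rcons (phi p) false) false = phi (p ++ nseq 2 true).
    by rewrite /p -!cats1 !phi_cat phi_nseq_true -!catA.
  by rewrite nfact_phi_ab.
- by rewrite -phi_rcons_false nfact_phi_a.
Qed.

Lemma nfact_phi_end_ab y (p := rcons (rcons y false) true) :
  [/\ nfact (phi p) = nfact (rcons y false) + nfact p,
      nfact (rcons (phi p) true) = nfact (rcons (rcons y false) false),
      nfact (rcons (phi p) false) = nfact (rcons y false) + nfact p,
      nfact (rcons (rcons (phi p) false) false) = nfact (rcons y false) + nfact p
    & nfact (rcons (rcons (phi p) false) true) = nfact (rcons p false)].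
Proof.
split.
- by rewrite {1}/p -cats1 (nfact_phi_ab _ (m := 1)).
- by rewrite phi_rcons_true -phi_rcons_false nfact_phi_a.
- have -> : rcons (phi p) false = phi (rcons y false ++ nseq 2 true).
    by rewrite /p -!cats1 !phi_cat phi_nseq_true -!catA.
  by rewrite nfact_phi_ab.
- have -> : rcons (rcons (phi p) false) false = phi (rcons y false ++ nseq 3 true).
    by rewrite /p -!cats1 !phi_cat phi_nseq_true -!catA.
  by rewrite nfact_phi_ab.
- by rewrite -phi_rcons_false nfact_phi_a.
Qed.

(** * Prefixes given by binary representations *)

Definition fibval1 (s : seq nat) : nat := \sum_(i < size s) nth 0 (rev s) i * fib i.+1.

Lemma fibval_rcons s d : fibval (rcons s d) = fibval s + fibval1 s + d.
Proof.
rewrite /fibval /fibval1 size_rcons big_ord_recl rev_rcons -[nth 0 _ ord0]/d -[fib 2]/1.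
under eq_bigr => i _ do rewrite lift0 [nth _ _ _]/= fibSS mulnDr.
by rewrite big_split muln1 addnC.
Qed.

Lemma fibval1_rcons s d : fibval1 (rcons s d) = fibval s + d.
Proof.
rewrite /fibval1 /fibval size_rcons big_ord_recl rev_rcons -[nth 0 _ ord0]/d -[fib 1]/1.
by under eq_bigr => i _ do rewrite lift0 [nth _ _ _]/=; rewrite muln1 addnC.
Qed.

Definition wval (w : seq bool) : nat := fibval (bits w).

Definition wval1 (w : seq bool) : nat := fibval1 (bits w).

Lemma wval_nil : wval [::] = 0.
Proof. by rewrite /wval /fibval big_ord0. Qed.

Lemma wval1_nil : wval1 [::] = 0.
Proof. by rewrite /wval1 /fibval1 big_ord0. Qed.

Lemma wval_rcons w (d : bool) : wval (rcons w d) = wval w + wval1 w + d.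
Proof. by rewrite /wval /bits map_rcons fibval_rcons. Qed.

Lemma wval1_rcons w (d : bool) : wval1 (rcons w d) = wval w + d.
Proof. by rewrite /wval1 /bits map_rcons fibval1_rcons. Qed.

Lemma wval1_le w : wval1 w <= wval w.
Proof.
by case/lastP: w => [|w d]; rewrite ?wval_nil ?wval1_nil // wval_rcons wval1_rcons; lia.
Qed.

Lemma wval1_gt0 w : (0 < wval1 w) = (0 < wval w).
Proof.
case/lastP: w => [|w d]; rewrite ?wval_nil ?wval1_nil // wval_rcons wval1_rcons.
by have := wval1_le w; lia.
Qed.

Definition wprefix (w : seq bool) : seq bool :=
  foldl (fun p d => phi (if d then rcons p true else p)) [::] w.

Lemma wprefix_rcons w d :
  wprefix (rcons w d) = phi (if d then rcons (wprefix w) true else wprefix w).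
Proof. by rewrite /wprefix foldl_rcons. Qed.

Lemma size_count_wprefix w :
  size (wprefix w) = wval w /\ count negb (wprefix w) = wval1 w.
Proof.
elim/last_ind: w => [|w d [size_w count_w]]; first by rewrite wval_nil wval1_nil.
rewrite wprefix_rcons wval_rcons wval1_rcons size_phi count_negb_phi.
by case: d; rewrite ?size_rcons -?cats1 ?count_cat /= size_w count_w; lia.
Qed.

Lemma wprefixE w : wprefix w = fibprefix (wval w).
Proof.
elim/last_ind: w => [|w d IH]; first by rewrite wval_nil.
have [<- _] := size_count_wprefix (rcons w d).
apply: (@fibprefixP _ (wval w).+1); rewrite wprefix_rcons IH.
have := prefix_phi_fibprefix (wval w); case: d => /=; first by rewrite phi_rcons cats1.
by apply: prefix_trans; apply: prefix_rcons.
Qed.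

Lemma V_wval w : V (wval w) = nfact (wprefix w).
Proof. by rewrite V_nfact wprefixE. Qed.

Lemma wprefix_wval0 w : wval w = 0 -> wprefix w = [::] /\ wval1 w = 0.
Proof.
move=> w0; have [size_w _] := size_count_wprefix w.
by split; [apply/nilP; rewrite /nilp size_w w0 | have := wval1_le w; lia].
Qed.

(** * Closed forms for the counts *)

Definition ntz (w : seq bool) : nat := find id (rev w).

Lemma ntz_rcons w (d : bool) : ntz (rcons w d) = if d then 0 else (ntz w).+1.
Proof. by rewrite /ntz rev_rcons; case: d. Qed.

Lemma wprefix_last w : 0 < wval w -> exists p, wprefix w = rcons p (odd (ntz w)).
Proof.
elim/last_ind: w => [|w d IH]; first by rewrite wval_nil.
rewrite wprefix_rcons ntz_rcons wval_rcons; case: d => /= [_|pos_w].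
  by exists (phi (wprefix w)); rewrite phi_rcons_true.
have [|p ->] := IH; first by have := wval1_le w; lia.
case: (odd _); first by exists (phi p); rewrite phi_rcons_true.
by exists (rcons (phi p) false); rewrite phi_rcons_false.
Qed.

Lemma wval_pred w : 0 < wval w ->
  exists u, [/\ (wval u).+1 = wval w, wval1 u + ~~ odd (ntz w) = wval1 w
              & odd (ntz w) -> ntz u = 0].
Proof.
elim/last_ind: w => [|w d IH]; first by rewrite wval_nil.
rewrite wval_rcons wval1_rcons ntz_rcons; case: d => /= [_|pos_w].
  by exists (rcons w false); rewrite wval_rcons wval1_rcons; split => //=; lia.
have [|u [eu yu ntz_u]] := IH; first by have := wval1_le w; lia.
case: (boolP (odd (ntz w))) => odd_w in yu ntz_u *.
  by exists (rcons u false); rewrite wval_rcons wval1_rcons /=; split => //; lia.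
by exists (rcons u true); rewrite wval_rcons wval1_rcons ntz_rcons /=; split => //; lia.
Qed.

Lemma wprefix_pred u w : (wval u).+1 = wval w -> exists c, wprefix w = rcons (wprefix u) c.
Proof. by rewrite !wprefixE => <-; apply: fibprefixS. Qed.

Definition counts_even w :=
  [/\ nfact (wprefix w) + wval1 w = (wval w).+1,
      nfact (rcons (wprefix w) true) + wval w = (wval1 w).*2
    & nfact (rcons (wprefix w) false) = nfact (wprefix w)].

Definition counts_odd w :=
  [/\ nfact (wprefix w) + wval w = (wval1 w).*2.+1,
      nfact (rcons (wprefix w) true) = 0
    & nfact (rcons (wprefix w) false) + wval1 w = (wval w).+1].

Definition counts w := if odd (ntz w) then counts_odd w else counts_even w.

Lemma counts_zero w : wval w = 0 -> counts_even w /\ counts_odd w.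
Proof.
move=> w0; have [p0 y0] := wprefix_wval0 w0.
by rewrite /counts_even /counts_odd p0 w0 y0; vm_compute.
Qed.

Lemma counts_rcons_zero w d : wval w = 0 -> counts (rcons w d).
Proof.
move=> w0; have [p0 y0] := wprefix_wval0 w0.
case: d; last first.
  have [] := @counts_zero (rcons w false); first by rewrite wval_rcons w0 y0.
  by rewrite /counts; case: (odd _).
rewrite /counts /counts_even ntz_rcons wprefix_rcons wval_rcons wval1_rcons.
by rewrite p0 w0 y0; vm_compute.
Qed.

Lemma counts_rcons_even w q : wprefix w = rcons q false -> counts_even w ->
  counts_even (rcons w true) /\ counts_odd (rcons w false).
Proof.
move=> ew [e1 e2 e3]; rewrite ew in e1 e2 e3.
have [t1 t2 t3 t4 t5] := nfact_phi_end_a q.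
rewrite /counts_even /counts_odd !wprefix_rcons phi_rcons_true ew !wval_rcons !wval1_rcons.
by rewrite t1 t2 t3 t4 t5 /=; split; split; lia.
Qed.

Lemma counts_rcons_odd w y : wprefix w = rcons (rcons y false) true ->
  nfact (rcons y false) + wval1 w = wval w ->
  nfact (rcons (rcons y false) false) = nfact (rcons y false) ->
  counts_odd w -> counts_even (rcons w true) /\ counts_even (rcons w false).
Proof.
move=> ew ey eya [e1 e2 e3]; rewrite ew in e1 e2 e3.
have [t1 t2 t3 t4 t5] := nfact_phi_end_ab y.
rewrite /counts_even !wprefix_rcons phi_rcons_true ew !wval_rcons !wval1_rcons.
by rewrite t1 t2 t3 t4 t5 /=; split; split; lia.
Qed.

Lemma counts_all w : counts w.
Proof.
elim/ltn_ind: (wval w) {-2}w (erefl (wval w)) => n IH {}w.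
case/lastP: w => [|w d] wn.
  by rewrite /counts /=; case: (counts_zero wval_nil).
have [w0|pos_w] := posnP (wval w); first exact: counts_rcons_zero.
rewrite /counts ntz_rcons.
have lt_wn : wval w < n by rewrite -wn wval_rcons -wval1_gt0 in pos_w *; lia.
clear wn.
have [p ep] := wprefix_last pos_w.
have cw := IH _ lt_wn w erefl; rewrite /counts in cw.
case: (boolP (odd (ntz w))) => odd_w in cw ep *; last first.
  by have [ce co] := counts_rcons_even ep cw; case: d; rewrite /= ?odd_w.
(* [wprefix w] ends in [b]; without it, it is [wprefix u] for the predecessor [u]. *)
have [u [eu yu /(_ odd_w) ntz_u]] := wval_pred pos_w; rewrite odd_w addn0 in yu.
have lt_un : wval u < n by lia.
have [cu1 _ cu3] : counts_even u by have := IH _ lt_un u erefl; rewrite /counts ntz_u.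
have pos_u : 0 < wval u by rewrite -wval1_gt0 yu wval1_gt0.
have [y ey] := wprefix_last pos_u; rewrite ntz_u /= in ey.
have [c ec] := wprefix_pred eu.
have ew : wprefix w = rcons (rcons y false) true.
  by move: ep; rewrite ec ey => /rcons_inj[_ ->].
rewrite ey yu in cu1 cu3.
have cy : nfact (rcons y false) + wval1 w = wval w by lia.
by have [ce1 ce0] := counts_rcons_odd ew cy cu3 cw; case: d; rewrite /= ?odd_w.
Qed.

Lemma counts_even_ntz w : ~~ odd (ntz w) -> counts_even w.
Proof. by move=> even_w; have := counts_all w; rewrite /counts (negbTE even_w). Qed.

Lemma cat_true_nseqS z j :
  z ++ true :: nseq j.+1 false = rcons (z ++ true :: nseq j false) false.
Proof. by rewrite -addn1 nseqD -cats1 -catA. Qed.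

Lemma ntz_cat_true_nseq z j : ntz (z ++ true :: nseq j false) = j.
Proof.
by elim: j => [|j IH]; rewrite ?cats1 ?ntz_rcons // cat_true_nseqS ntz_rcons IH.
Qed.

Lemma cat_flatten_nseqS z m :
  z ++ flatten (nseq m.+1 [:: false; true])
  = rcons (rcons (z ++ flatten (nseq m [:: false; true])) false) true.
Proof. by rewrite -addn1 nseqD flatten_cat /= -!cats1 -!catA. Qed.

(* The digit rewriting [011 -> 100] preserves both values. *)
Lemma wvals_cat_true_nseq_double z m :
  wval (z ++ true :: nseq m.*2 false)
    = wval (rcons (z ++ flatten (nseq m [:: false; true])) true) /\
  wval1 (z ++ true :: nseq m.*2 false)
    = wval1 (rcons (z ++ flatten (nseq m [:: false; true])) true).
Proof.
elim: m => [|m [IH1 IH2]]; first by rewrite /= cats0 cats1.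
rewrite doubleS !cat_true_nseqS cat_flatten_nseqS !(wval_rcons, wval1_rcons) IH1 IH2.
by rewrite !(wval_rcons, wval1_rcons) /=; split; lia.
Qed.

Theorem proposition3 (z : seq bool) (k : nat) (hk : 1 <= k) :
  V (fibval (bits z ++ 1 :: nseq (2 * k) 0)) =
  V (fibval (bits z ++ 1 :: nseq (2 * k - 2) 0)) +
  V (fibval (bits z ++ flatten (nseq k [:: 0; 1]))).
Proof.
case: k hk => [|k] // _.
have bits_true_nseq j : bits z ++ 1 :: nseq j 0 = bits (z ++ true :: nseq j false).
  by rewrite /bits map_cat /= map_nseq.
have -> : bits z ++ flatten (nseq k.+1 [:: 0; 1])
          = bits (rcons (rcons (z ++ flatten (nseq k [:: false; true])) false) true).
  by rewrite -cat_flatten_nseqS /bits map_cat map_flatten map_nseq.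
have -> : 2 * k.+1 - 2 = k.*2 by rewrite -mul2n; lia.
rewrite !bits_true_nseq -!/(wval _) !V_wval mul2n doubleS !cat_true_nseqS.
have [eA _ _] : counts_even (rcons (rcons (z ++ true :: nseq k.*2 false) false) false).
  by apply: counts_even_ntz; rewrite !ntz_rcons ntz_cat_true_nseq /= odd_double.
have [eB _ _] : counts_even (z ++ true :: nseq k.*2 false).
  by apply: counts_even_ntz; rewrite ntz_cat_true_nseq odd_double.
have [eC _ _] :
    counts_even (rcons (rcons (z ++ flatten (nseq k [:: false; true])) false) true).
  by apply: counts_even_ntz; rewrite ntz_rcons.
have [vB v1B] := wvals_cat_true_nseq_double z k.
move: eA eB eC; rewrite !(wval_rcons, wval1_rcons) vB v1B !(wval_rcons, wval1_rcons) /=.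
by lia.
Qed.
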